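(* Let $W\in\{\mathrm{A}_{\frac12\infty},\mathrm{D}_{\frac12\infty}\}$ and let $f_W:\mathbb{C}^2\to\mathbb{C}$ be the entire function defined below. Then the set of critical values of $f_W$ is $\{0,1\}$; that is, the set $C_W$ of critical points of $f_W$ is contained in $f_W^{-1}(0)\cup f_W^{-1}(1)$, and both values are attained at critical points.
   Context: Let $s(x)=\frac{\sin\sqrt{x}}{\sqrt{x}}=\prod_{n\ge1}\big(1-\frac{x}{n^2\pi^2}\big)$ and $c(x)=\cos\sqrt{x}=\prod_{n\ge1}\big(1-\frac{4x}{(2n-1)^2\pi^2}\big)$, entire functions of $x\in\mathbb{C}$ (real on $\mathbb{R}$), satisfying $xs(x)^2+c(x)^2=1$. Define $f_{\mathrm{A}_{\frac12\infty}}(x,y)=xs(x)^2-y^2=1-c(x)^2-y^2$ and $f_{\mathrm{D}_{\frac12\infty}}(x,y)=xs(x)^2-xy^2=1-c(x)^2-xy^2$ on $\mathbb{C}^2$. *)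

From Stdlib Require Import Reals.
From Coquelicot Require Import Coquelicot.
Open Scope C_scope.

(* Entire functions given by their (everywhere convergent) power series:
   c(x) = cos sqrt x = sum_n (-1)^n x^n / (2n)!,
   s(x) = sin sqrt x / sqrt x = sum_n (-1)^n x^n / (2n+1)!. *)
Definition c_term (x : C) (n : nat) : C :=
  RtoC ((-1)^n / INR (Factorial.fact (2 * n)))%R * Cpow x n.
Definition s_term (x : C) (n : nat) : C :=
  RtoC ((-1)^n / INR (Factorial.fact (2 * n + 1)))%R * Cpow x n.

Definition Cseries (a : nat -> C) : C :=
  (Series (fun n => Re (a n)), Series (fun n => Im (a n))).

Definition cfun (x : C) : C := Cseries (c_term x).
Definition sfun (x : C) : C := Cseries (s_term x).

Inductive Wtype := A_half_infty | D_half_infty.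

Definition fW (W : Wtype) (x y : C) : C :=
  match W with
  | A_half_infty => x * sfun x ^ 2 - y ^ 2
  | D_half_infty => x * sfun x ^ 2 - x * y ^ 2
  end.

Definition critical_point (F : C -> C -> C) (x y : C) : Prop :=
  @is_derive C_AbsRing C_NormedModule (fun t => F t y) x (RtoC 0) /\
  @is_derive C_AbsRing C_NormedModule (fun t => F x t) y (RtoC 0).

From Stdlib Require Import Reals Lra Lia Factorial.
From Coquelicot Require Import Coquelicot.
Open Scope C_scope.

(* Termwise differentiation of the power series gives c' = -s/2 and (x s^2)' = c s, so
   x s^2 + c^2 has zero derivative and keeps its value 1 at x = 0.  The y-derivative of f_W
   vanishes only where y = 0 (type A) or x y = 0 (type D), and at y = 0 the x-derivative is
   c s.  Hence at a critical point either x = 0 and f_W = 0, or y = 0 and c(x) s(x) = 0, so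
   that f_W = x s^2 is 0 when s(x) = 0 and 1 - c^2 = 1 when c(x) = 0.  Both values occur, at
   (pi^2, 0) and (pi^2/4, 0). *)

Lemma Im_le_Cmod (c : C) : Rabs (Im c) <= Cmod c.
Proof.
  pose proof (Cmod2_alt c). pose proof (Cmod_ge_0 c).
  apply Rabs_le; split; nra.
Qed.

Lemma Cmod_le_Rabs_Re_Im (c : C) : Cmod c <= Rabs (Re c) + Rabs (Im c).
Proof.
  pose proof (Cmod2_alt c). pose proof (Cmod_ge_0 c).
  pose proof (pow2_abs (Re c)). pose proof (pow2_abs (Im c)).
  pose proof (Rabs_pos (Re c)). pose proof (Rabs_pos (Im c)).
  nra.
Qed.

Lemma ex_series_Rabs_le (a b : nat -> R) :
  (forall n, Rabs (a n) <= b n) -> ex_series b -> ex_series a.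
Proof. intros H Hb. apply (@ex_series_le R_AbsRing R_CompleteNormedModule a b); auto. Qed.

Definition Cabs_summable (u : nat -> C) : Prop := ex_series (fun n => Cmod (u n)).

Lemma ex_series_Re (u : nat -> C) : Cabs_summable u -> ex_series (fun n => Re (u n)).
Proof.
  intros Hu. apply ex_series_Rabs. refine (ex_series_Rabs_le _ _ _ Hu).
  intros n. rewrite Rabs_Rabsolu. apply re_le_Cmod.
Qed.

Lemma ex_series_Im (u : nat -> C) : Cabs_summable u -> ex_series (fun n => Im (u n)).
Proof.
  intros Hu. apply ex_series_Rabs. refine (ex_series_Rabs_le _ _ _ Hu).
  intros n. rewrite Rabs_Rabsolu. apply Im_le_Cmod.
Qed.

Lemma Cabs_summable_ext (u v : nat -> C) :
  (forall n, u n = v n) -> Cabs_summable u -> Cabs_summable v.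
Proof.
  intros H Hu. refine (ex_series_Rabs_le _ _ _ Hu). intros n.
  rewrite H, Rabs_pos_eq by apply Cmod_ge_0. apply Rle_refl.
Qed.

Lemma Cabs_summable_plus (u v : nat -> C) :
  Cabs_summable u -> Cabs_summable v -> Cabs_summable (fun n => u n + v n).
Proof.
  intros Hu Hv.
  refine (ex_series_Rabs_le _ _ _ (@ex_series_plus R_AbsRing R_NormedModule _ _ Hu Hv)).
  intros n. rewrite Rabs_pos_eq by apply Cmod_ge_0. apply Cmod_triangle.
Qed.

Lemma Cabs_summable_scal (k : C) (u : nat -> C) :
  Cabs_summable u -> Cabs_summable (fun n => k * u n).
Proof.
  intros Hu.
  refine (ex_series_Rabs_le _ _ _ (@ex_series_scal_l R_AbsRing R_NormedModule (Cmod k) _ Hu)).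
  intros n. rewrite Rabs_pos_eq by apply Cmod_ge_0. rewrite Cmod_mult. apply Rle_refl.
Qed.

Lemma Cabs_summable_minus (u v : nat -> C) :
  Cabs_summable u -> Cabs_summable v -> Cabs_summable (fun n => u n - v n).
Proof.
  intros Hu Hv. apply (Cabs_summable_plus _ _ Hu).
  refine (Cabs_summable_ext _ _ _ (Cabs_summable_scal (-1) _ Hv)).
  intros n. ring.
Qed.

Lemma Cseries_ext (u v : nat -> C) : (forall n, u n = v n) -> Cseries u = Cseries v.
Proof. intros H. unfold Cseries. f_equal; apply Series_ext; intros n; rewrite H; reflexivity. Qed.

Lemma Cseries_scal_l (k : C) (u : nat -> C) : Cabs_summable u ->
  Cseries (fun n => k * u n) = k * Cseries u.
Proof.
  intros Hu. pose proof (ex_series_Re _ Hu). pose proof (ex_series_Im _ Hu).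
  destruct k as [a b]. unfold Cseries; simpl.
  rewrite Series_minus, Series_plus, !Series_scal_l; try reflexivity;
    apply (@ex_series_scal_l R_AbsRing R_NormedModule); assumption.
Qed.

Lemma Cseries_minus (u v : nat -> C) : Cabs_summable u -> Cabs_summable v ->
  Cseries (fun n => u n - v n) = Cseries u - Cseries v.
Proof.
  intros Hu Hv. unfold Cseries, Cminus, Cplus, Copp; cbn.
  f_equal; apply Series_minus; auto using ex_series_Re, ex_series_Im.
Qed.

Lemma Cseries_incr_1 (u : nat -> C) : u 0%nat = 0 -> Cseries u = Cseries (fun n => u (S n)).
Proof.
  intros H. unfold Cseries.
  rewrite (Series_incr_1_aux (fun n => Re (u n))), (Series_incr_1_aux (fun n => Im (u n)));
    rewrite ?H; reflexivity.
Qed.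

Lemma Cmod_Cseries_le (u : nat -> C) : Cabs_summable u ->
  Cmod (Cseries u) <= 2 * Series (fun n => Cmod (u n)).
Proof.
  intros Hu.
  assert (Hle : forall p : C -> R, (forall c, Rabs (p c) <= Cmod c) ->
    Rabs (Series (fun n => p (u n))) <= Series (fun n => Cmod (u n))).
  { intros p Hp. assert (Hpu : ex_series (fun n => Rabs (p (u n)))).
    { refine (ex_series_Rabs_le _ _ _ Hu). intros n. rewrite Rabs_Rabsolu. apply Hp. }
    eapply Rle_trans; [apply (Series_Rabs _ Hpu) |].
    apply Series_le; [| exact Hu]. intros n. split; [apply Rabs_pos | apply Hp]. }
  eapply Rle_trans; [apply Cmod_le_Rabs_Re_Im |]. unfold Cseries; simpl.
  pose proof (Hle Re re_le_Cmod). pose proof (Hle Im Im_le_Cmod). simpl in *. lra.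
Qed.

Lemma is_series_exp (r : R) : is_series (fun n => r ^ n / INR (fact n))%R (exp r).
Proof.
  eapply is_series_ext; [| apply (is_exp_Reals r)].
  intros n. simpl. rewrite pow_n_pow. reflexivity.
Qed.

Definition CPSeries (a : nat -> R) (z : C) : C := Cseries (fun n => RtoC (a n) * Cpow z n).

Definition fact_bounded (a : nat -> R) (M : R) : Prop :=
  forall n, Rabs (a n) <= M / INR (fact n).

Lemma fact_bounded_ge0 (a : nat -> R) (M : R) : fact_bounded a M -> 0 <= M.
Proof. intros H. specialize (H 0%nat). simpl in H. pose proof (Rabs_pos (a 0%nat)). lra. Qed.

Lemma fact_bounded_PS_derive (a : nat -> R) (M : R) :
  fact_bounded a M -> fact_bounded (PS_derive a) M.
Proof.
  intros H n. specialize (H (S n)). unfold PS_derive.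
  rewrite Rabs_mult, Rabs_pos_eq by apply pos_INR.
  rewrite fact_simpl, mult_INR in H.
  assert (0 < INR (S n)) by (apply lt_0_INR; lia).
  assert (0 < INR (fact n)) by apply INR_fact_lt_0.
  replace (M / INR (fact n))%R with (INR (S n) * (M / (INR (S n) * INR (fact n))))%R
    by (field; lra).
  apply Rmult_le_compat_l; lra.
Qed.

Section FactBounded.

Variables (a : nat -> R) (M : R).
Hypothesis Ha : fact_bounded a M.

Lemma fact_bounded_term_le (w : nat -> C) (Q c : R) (n : nat) :
  Cmod (w n) <= c * Q ^ n ->
  Cmod (RtoC (a n) * w n) <= c * M * (Q ^ n / INR (fact n)).
Proof.
  intros Hw. rewrite Cmod_mult, Cmod_R.
  pose proof (Ha n). pose proof (Rabs_pos (a n)). pose proof (Cmod_ge_0 (w n)).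
  pose proof (INR_fact_lt_0 n).
  replace (c * M * (Q ^ n / INR (fact n)))%R with ((M / INR (fact n)) * (c * Q ^ n))%R
    by (field; lra).
  apply Rmult_le_compat; assumption.
Qed.

Lemma Cabs_summable_fact_bounded (w : nat -> C) (Q c : R) :
  (forall n, Cmod (w n) <= c * Q ^ n) -> Cabs_summable (fun n => RtoC (a n) * w n).
Proof.
  intros Hw. refine (ex_series_Rabs_le _ _ _
    (@ex_series_scal_l R_AbsRing R_NormedModule (c * M)%R _ (ex_intro _ _ (is_series_exp Q)))).
  intros n. rewrite Rabs_pos_eq by apply Cmod_ge_0.
  exact (fact_bounded_term_le w Q c n (Hw n)).
Qed.

Lemma Cabs_summable_CPSeries (z : C) : Cabs_summable (fun n => RtoC (a n) * Cpow z n).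
Proof.
  apply (Cabs_summable_fact_bounded _ (Cmod z) 1).
  intros n. rewrite Cmod_pow. lra.
Qed.

Lemma Cmod_Cseries_fact_bounded (w : nat -> C) (Q c : R) :
  (forall n, Cmod (w n) <= c * Q ^ n) ->
  Cmod (Cseries (fun n => RtoC (a n) * w n)) <= 2 * (c * M * exp Q).
Proof.
  intros Hw. eapply Rle_trans; [apply Cmod_Cseries_le, (Cabs_summable_fact_bounded _ Q c Hw) |].
  apply Rmult_le_compat_l; [lra |].
  rewrite <- (is_series_unique _ _ (is_series_exp Q)), <- Series_scal_l.
  apply Series_le.
  - intros n. split; [apply Cmod_ge_0 | exact (fact_bounded_term_le w Q c n (Hw n))].
  - exact (@ex_series_scal_l R_AbsRing R_NormedModule (c * M)%R _ (ex_intro _ _ (is_series_exp Q))).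
Qed.

End FactBounded.

Definition Cpow_rem (z h : C) (n : nat) : C :=
  Cpow (z + h) n - Cpow z n - RtoC (INR n) * h * Cpow z (pred n).

Lemma Cpow_rem_S (z h : C) (n : nat) :
  Cpow_rem z h (S n) = (z + h) * Cpow_rem z h n + RtoC (INR n) * h * h * Cpow z (pred n).
Proof.
  unfold Cpow_rem. destruct n as [| m].
  - simpl. ring.
  - cbn [pred]. rewrite !Cpow_S, !S_INR, !RtoC_plus. ring.
Qed.

Lemma INR_le_pow2 (n : nat) : (INR n <= 2 ^ n)%R.
Proof.
  pose proof (Nat.pow_gt_lin_r 2 n ltac:(lia)) as H.
  apply lt_INR in H. rewrite pow_INR in H.
  replace (INR 2) with 2%R in H by (simpl; lra). lra.
Qed.

Lemma Cmod_Cpow_rem_le (z h : C) (n : nat) : Cmod h <= 1 ->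
  Cmod (Cpow_rem z h n) <= Cmod h ^ 2 * (2 * (Cmod z + 1)) ^ n.
Proof.
  intros Hh. set (Q := (Cmod z + 1)%R).
  pose proof (Cmod_ge_0 z). pose proof (Cmod_ge_0 h).
  induction n as [| n IH].
  - unfold Cpow_rem. simpl. replace (1 - 1 - RtoC 0 * h * 1) with (RtoC 0) by ring.
    rewrite Cmod_0. nra.
  - rewrite Cpow_rem_S. eapply Rle_trans; [apply Cmod_triangle |].
    rewrite !Cmod_mult, !Cmod_R, Cmod_pow, Rabs_pos_eq by apply pos_INR.
    assert (Hzh : Cmod (z + h) <= Q) by (eapply Rle_trans; [apply Cmod_triangle | unfold Q; lra]).
    assert (Hzn : Cmod z ^ pred n <= Q ^ n).
    { apply Rle_trans with (Q ^ pred n)%R.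
      - apply pow_incr. unfold Q. lra.
      - apply Rle_pow; [unfold Q; lra | lia]. }
    assert (Hn : INR n * Cmod z ^ pred n <= 2 ^ n * Q ^ n).
    { apply Rmult_le_compat; auto using pos_INR, pow_le, INR_le_pow2. }
    rewrite Rpow_mult_distr in IH.
    set (P := (2 ^ n * Q ^ n)%R) in *.
    assert (HP : 0 <= P) by (apply Rmult_le_pos; apply pow_le; unfold Q; lra).
    replace ((2 * Q) ^ S n)%R with (2 * Q * P)%R by (unfold P; simpl; rewrite Rpow_mult_distr; ring).
    assert (H1 : Cmod (z + h) * Cmod (Cpow_rem z h n) <= Q * (Cmod h ^ 2 * P)).
    { apply Rmult_le_compat; auto using Cmod_ge_0. }
    assert (H2 : INR n * Cmod h * Cmod h * Cmod z ^ pred n <= Cmod h ^ 2 * P).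
    { replace (INR n * Cmod h * Cmod h * Cmod z ^ pred n)%R
        with (Cmod h ^ 2 * (INR n * Cmod z ^ pred n))%R by ring.
      apply Rmult_le_compat_l; [apply pow_le |]; assumption. }
    assert (H3 : Cmod h ^ 2 * P <= Q * (Cmod h ^ 2 * P)).
    { assert (0 <= Cmod h ^ 2 * P) by (apply Rmult_le_pos; [apply pow_le |]; assumption).
      unfold Q. nra. }
    lra.
Qed.

Lemma is_derive_quadratic_rem (f : C -> C) (z l : C) (K : R) : 0 < K ->
  (forall h, Cmod h <= 1 -> Cmod (f (z + h) - f z - h * l) <= K * Cmod h ^ 2) ->
  is_derive f z l.
Proof.
  intros HK H. split; [apply is_linear_scal_l |].
  intros x Hx. apply (@is_filter_lim_locally_unique C_AbsRing (AbsRing_NormedModule C_AbsRing)) in Hx.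
  subst x. intros eps.
  assert (Hd : 0 < Rmin 1 (eps / K)).
  { apply Rmin_pos; [lra | apply Rdiv_lt_0_compat; [apply cond_pos | lra]]. }
  exists (mkposreal _ Hd). intros y Hy. change (Cmod (minus y z) < Rmin 1 (eps / K)) in Hy.
  change (Cmod (f y - f z - minus y z * l) <= eps * Cmod (minus y z)).
  set (h := minus y z) in *.
  assert (Ey : @eq C y (z + h)).
  { assert (E : forall u v : C, u = v + (u - v)) by (intros; ring). exact (E y z). }
  rewrite Ey.
  pose proof (Rmin_l 1 (eps / K)). pose proof (Rmin_r 1 (eps / K)). pose proof (Cmod_ge_0 h).
  assert (K * Cmod h <= eps).
  { assert (Ee : (K * (eps / K))%R = eps) by (field; lra).
    rewrite <- Ee. apply Rmult_le_compat_l; lra. }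
  eapply Rle_trans; [apply H; lra |]. simpl. nra.
Qed.

Lemma is_derive_CPSeries (a : nat -> R) (M : R) (z : C) :
  fact_bounded a M -> is_derive (CPSeries a) z (CPSeries (PS_derive a) z).
Proof.
  intros Ha. pose proof (fact_bounded_ge0 _ _ Ha).
  set (Q := (2 * (Cmod z + 1))%R).
  assert (HQ : 0 <= Q) by (unfold Q; pose proof (Cmod_ge_0 z); lra).
  apply (is_derive_quadratic_rem _ _ _ (2 * (M * exp Q) + 1)); [pose proof (exp_pos Q); nra |].
  intros h Hh.
  set (A := fun n => RtoC (a n) * Cpow (z + h) n).
  set (B := fun n => RtoC (a n) * Cpow z n).
  set (D := fun n => RtoC (a n) * (RtoC (INR n) * h * Cpow z (pred n))).
  set (E := fun n => RtoC (a n) * Cpow_rem z h n).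
  assert (HA : Cabs_summable A) by apply (Cabs_summable_CPSeries _ _ Ha).
  assert (HB : Cabs_summable B) by apply (Cabs_summable_CPSeries _ _ Ha).
  assert (HE : Cabs_summable E).
  { apply (Cabs_summable_fact_bounded _ _ Ha _ Q (Cmod h ^ 2)).
    intros n. apply Cmod_Cpow_rem_le, Hh. }
  assert (HD : Cabs_summable D).
  { refine (Cabs_summable_ext _ _ _
      (Cabs_summable_minus _ _ (Cabs_summable_minus _ _ HA HB) HE)).
    intros n. unfold A, B, D, E, Cpow_rem. ring. }
  assert (ED : Cseries D = h * CPSeries (PS_derive a) z).
  { rewrite (Cseries_incr_1 D) by (unfold D; simpl; ring).
    unfold CPSeries. rewrite <- Cseries_scal_l
      by apply (Cabs_summable_CPSeries _ _ (fact_bounded_PS_derive _ _ Ha)).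
    apply Cseries_ext. intros n. unfold D, PS_derive. simpl pred. rewrite RtoC_mult. ring. }
  replace (CPSeries a (z + h) - CPSeries a z - h * CPSeries (PS_derive a) z) with (Cseries E).
  - eapply Rle_trans.
    + apply (Cmod_Cseries_fact_bounded _ _ Ha _ Q (Cmod h ^ 2)).
      intros n. apply Cmod_Cpow_rem_le, Hh.
    + pose proof (pow_le (Cmod h) 2 (Cmod_ge_0 h)). pose proof (exp_pos Q). nra.
  - rewrite <- ED. unfold CPSeries. fold A B.
    rewrite <- (Cseries_minus _ _ HA HB), <- Cseries_minus by auto using Cabs_summable_minus.
    apply Cseries_ext. intros n. unfold A, B, D, E, Cpow_rem. ring.
Qed.

(* Coquelicot's product rule is stated for the normed module [AbsRing_NormedModule C_AbsRing],
   which has the same norm as [C_NormedModule] but is not syntactically the same structure;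
   the wrappers below state the rules with the [C] operations so that they apply directly. *)
Lemma is_derive_C_of_ring (f : C -> C) (x l : C) :
  @is_derive C_AbsRing (AbsRing_NormedModule C_AbsRing) f x l -> is_derive f x l.
Proof. intros [_ Hd]. split; [apply is_linear_scal_l | exact Hd]. Qed.

Lemma is_derive_ring_of_C (f : C -> C) (x l : C) :
  is_derive f x l -> @is_derive C_AbsRing (AbsRing_NormedModule C_AbsRing) f x l.
Proof. intros [_ Hd]. split; [apply is_linear_scal_l | exact Hd]. Qed.

Lemma is_derive_Cmult (f g : C -> C) (x df dg : C) :
  is_derive f x df -> is_derive g x dg -> is_derive (fun t => f t * g t) x (df * g x + f x * dg).
Proof.
  intros Hf Hg. apply is_derive_C_of_ring.
  exact (is_derive_mult f g x df dg (is_derive_ring_of_C _ _ _ Hf) (is_derive_ring_of_C _ _ _ Hg) Cmult_comm).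
Qed.

Lemma is_derive_Cid (x : C) : is_derive (fun t : C => t) x (RtoC 1).
Proof. apply is_derive_C_of_ring. exact (@is_derive_id C_AbsRing x). Qed.

Lemma is_derive_Cconst (a x : C) : is_derive (fun _ : C => a) x (RtoC 0).
Proof. apply is_derive_C_of_ring. exact (@is_derive_const C_AbsRing (AbsRing_NormedModule C_AbsRing) a x). Qed.

Lemma is_derive_Csqr (f : C -> C) (x df : C) :
  is_derive f x df -> is_derive (fun t => f t ^ 2) x (2 * f x * df).
Proof.
  intros Hf. apply (is_derive_ext (fun t => f t * (f t * 1))); [reflexivity |].
  replace (2 * f x * df) with (df * (f x * 1) + f x * (df * 1 + f x * 0)) by ring.
  apply (is_derive_Cmult f (fun t => f t * 1)); [exact Hf |].
  apply (is_derive_Cmult f (fun _ => 1)); [exact Hf | apply is_derive_Cconst].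
Qed.

Lemma is_derive_Cplus (f g : C -> C) (x df dg : C) :
  is_derive f x df -> is_derive g x dg -> is_derive (fun t => f t + g t) x (df + dg).
Proof. exact (is_derive_plus f g x df dg). Qed.

Lemma is_derive_Cminus (f g : C -> C) (x df dg : C) :
  is_derive f x df -> is_derive g x dg -> is_derive (fun t => f t - g t) x (df - dg).
Proof. exact (is_derive_minus f g x df dg). Qed.

Lemma is_derive_eq_val (f : C -> C) (x l l' : C) : is_derive f x l -> l = l' -> is_derive f x l'.
Proof. intros H E. subst. exact H. Qed.

Lemma fact_bounded_cos_n : fact_bounded cos_n 1.
Proof.
  intros n. unfold cos_n, Rdiv.
  rewrite Rabs_mult, pow_1_abs, Rabs_inv, Rabs_pos_eq by apply pos_INR.
  assert (H : (fact n <= fact (2 * n))%nat) by (apply fact_le; lia).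
  apply le_INR in H. pose proof (INR_fact_lt_0 n).
  rewrite !Rmult_1_l. apply Rinv_le_contravar; lra.
Qed.

Lemma fact_bounded_sin_n : fact_bounded sin_n 1.
Proof.
  intros n. unfold sin_n, Rdiv.
  rewrite Rabs_mult, pow_1_abs, Rabs_inv, Rabs_pos_eq by apply pos_INR.
  assert (H : (fact n <= fact (2 * n + 1))%nat) by (apply fact_le; lia).
  apply le_INR in H. pose proof (INR_fact_lt_0 n).
  rewrite !Rmult_1_l. apply Rinv_le_contravar; lra.
Qed.

Lemma PS_derive_cos_n (n : nat) : PS_derive cos_n n = (- / 2 * sin_n n)%R.
Proof.
  unfold PS_derive, cos_n, sin_n.
  replace (2 * S n)%nat with (S (S (2 * n))) by lia.
  replace (2 * n + 1)%nat with (S (2 * n)) by lia.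
  rewrite (fact_simpl (S (2 * n))), mult_INR.
  pose proof (INR_fact_lt_0 (S (2 * n))).
  replace (INR (S (S (2 * n)))) with (2 * INR (S n))%R by (rewrite !S_INR, mult_INR; simpl; ring).
  assert (0 < INR (S n)) by (apply lt_0_INR; lia).
  simpl pow. field. lra.
Qed.

Lemma PS_derive_sin_n (n : nat) : (2 * PS_derive sin_n n = cos_n (S n) - sin_n (S n))%R.
Proof.
  unfold PS_derive, cos_n, sin_n.
  set (m := (2 * S n)%nat).
  replace (m + 1)%nat with (S m) by lia.
  rewrite (fact_simpl m), mult_INR.
  pose proof (INR_fact_lt_0 m).
  assert (Hm : INR (S m) = (2 * INR (S n) + 1)%R) by (unfold m; rewrite S_INR, mult_INR; simpl; ring).
  rewrite Hm.
  assert (0 < INR (S n)) by (apply lt_0_INR; lia).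
  field. lra.
Qed.

Lemma is_derive_cfun (x : C) : is_derive cfun x (- / 2 * sfun x).
Proof.
  apply (is_derive_eq_val _ _ _ _ (is_derive_CPSeries cos_n 1 x fact_bounded_cos_n)).
  change (sfun x) with (CPSeries sin_n x). unfold CPSeries.
  rewrite <- Cseries_scal_l by apply (Cabs_summable_CPSeries _ _ fact_bounded_sin_n).
  apply Cseries_ext. intros n.
  rewrite PS_derive_cos_n, RtoC_mult, RtoC_opp, RtoC_inv by lra. ring.
Qed.

Lemma CPSeries_PS_derive_sin_n (x : C) :
  2 * x * CPSeries (PS_derive sin_n) x = cfun x - sfun x.
Proof.
  change (cfun x - sfun x) with (CPSeries cos_n x - CPSeries sin_n x). unfold CPSeries.
  rewrite <- Cseries_scal_l
    by apply (Cabs_summable_CPSeries _ _ (fact_bounded_PS_derive _ _ fact_bounded_sin_n)).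
  rewrite <- Cseries_minus
    by first [apply (Cabs_summable_CPSeries _ _ fact_bounded_cos_n)
             | apply (Cabs_summable_CPSeries _ _ fact_bounded_sin_n)].
  rewrite (Cseries_incr_1 (fun n => _ - _)) by (unfold cos_n, sin_n; simpl; field).
  apply Cseries_ext. intros n.
  assert (E := f_equal RtoC (PS_derive_sin_n n)). rewrite RtoC_mult, RtoC_minus in E.
  transitivity ((RtoC (cos_n (S n)) - RtoC (sin_n (S n))) * Cpow x (S n)); [| ring].
  rewrite <- E, Cpow_S. ring.
Qed.

Lemma is_derive_x_sfun_sqr (x : C) : is_derive (fun t => t * sfun t ^ 2) x (cfun x * sfun x).
Proof.
  eapply is_derive_eq_val.
  - apply is_derive_Cmult; [apply is_derive_Cid |].
    apply is_derive_Csqr, (is_derive_CPSeries sin_n 1 x fact_bounded_sin_n).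
  - replace (cfun x) with (2 * x * CPSeries (PS_derive sin_n) x + sfun x)
      by (rewrite CPSeries_PS_derive_sin_n; ring).
    change (CPSeries sin_n x) with (sfun x). ring.
Qed.

Lemma is_derive_cfun_sqr (x : C) : is_derive (fun t => cfun t ^ 2) x (- (cfun x * sfun x)).
Proof.
  eapply is_derive_eq_val; [apply is_derive_Csqr, is_derive_cfun |].
  field.
Qed.

Section ZeroDerivative.

Variable G : C -> C.
Hypothesis HG : forall w, is_derive G w (RtoC 0).

Lemma is_derive_zero_along_ray (p : C -> R) (z : C) :
  (forall w, Rabs (p w) <= Cmod w) -> (forall u v, p (u - v) = (p u - p v)%R) ->
  forall t, is_derive (fun s => p (G (RtoC s * z))) t 0%R.
Proof.
  intros Hp Hl t. split; [apply is_linear_scal_l |].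
  intros x Hx. apply (@is_filter_lim_locally_unique R_AbsRing (AbsRing_NormedModule R_AbsRing)) in Hx.
  subst x. intros eps.
  assert (Hz : 0 < Cmod z + 1) by (pose proof (Cmod_ge_0 z); lra).
  destruct (proj2 (HG (RtoC t * z)) (RtoC t * z) (fun P HP => HP)
    (mkposreal _ (Rdiv_lt_0_compat _ _ (cond_pos eps) Hz))) as [d Hd].
  exists (mkposreal _ (Rdiv_lt_0_compat _ _ (cond_pos d) Hz)).
  intros s Hs. change (Rabs (s - t) < d / (Cmod z + 1)) in Hs.
  change (Rabs (p (G (RtoC s * z)) - p (G (RtoC t * z)) - (s - t) * 0) <= eps * Rabs (s - t)).
  assert (Hst : Cmod (RtoC s * z - RtoC t * z) = (Rabs (s - t) * Cmod z)%R).
  { rewrite <- Cmod_R, <- Cmod_mult, RtoC_minus. f_equal. ring. }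
  pose proof (Cmod_ge_0 z). pose proof (Rabs_pos (s - t)). pose proof (cond_pos eps).
  assert (Hball : Cmod (RtoC s * z - RtoC t * z) < d).
  { rewrite Hst. apply (Rmult_lt_compat_r (Cmod z + 1)) in Hs; [| exact Hz].
    unfold Rdiv in Hs. rewrite Rmult_assoc, Rinv_l, Rmult_1_r in Hs by lra. nra. }
  specialize (Hd _ Hball).
  change (Cmod (G (RtoC s * z) - G (RtoC t * z) - (RtoC s * z - RtoC t * z) * RtoC 0)
    <= eps / (Cmod z + 1) * Cmod (RtoC s * z - RtoC t * z)) in Hd.
  replace (G (RtoC s * z) - G (RtoC t * z) - (RtoC s * z - RtoC t * z) * RtoC 0)
    with (G (RtoC s * z) - G (RtoC t * z)) in Hd by ring.
  rewrite Hst in Hd.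
  rewrite Rmult_0_r, Rminus_0_r, <- Hl.
  assert (Hfrac : eps / (Cmod z + 1) * (Rabs (s - t) * Cmod z) <= eps * Rabs (s - t)).
  { unfold Rdiv. replace (eps * / (Cmod z + 1) * (Rabs (s - t) * Cmod z))%R
      with (eps * Rabs (s - t) * (Cmod z / (Cmod z + 1)))%R by (field; lra).
    assert (Cmod z / (Cmod z + 1) <= 1).
    { apply Rmult_le_reg_r with (Cmod z + 1)%R; [lra |]. unfold Rdiv.
      rewrite Rmult_assoc, Rinv_l by lra. lra. }
    assert (0 <= eps * Rabs (s - t)) by nra. nra. }
  eapply Rle_trans; [apply Hp |]. lra.
Qed.

(* Mean value theorem for the real and imaginary parts of [t |-> G (t z)] on [0, 1]. *)
Lemma zero_derive_const (z : C) : G z = G (RtoC 0).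
Proof.
  assert (K : forall p : C -> R, (forall w, Rabs (p w) <= Cmod w) ->
      (forall u v, p (u - v) = (p u - p v)%R) -> p (G z) = p (G (RtoC 0))).
  { intros p Hp Hl.
    destruct (MVT_cor4 (fun t => p (G (RtoC t * z))) (fun _ => 0%R) 0 1
      (fun c _ => is_derive_zero_along_ray p z Hp Hl c) 1) as [c [Hc _]].
    { rewrite Rminus_0_r, Rabs_R1. lra. }
    rewrite Cmult_1_l, Cmult_0_l in Hc. lra. }
  apply injective_projections.
  - apply K; [apply re_le_Cmod | intros; simpl; ring].
  - apply K; [apply Im_le_Cmod | intros; simpl; ring].
Qed.

End ZeroDerivative.

Lemma CPSeries_RtoC (a : nat -> R) (r : R) :
  CPSeries a (RtoC r) = RtoC (Series (fun n => a n * r ^ n)%R).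
Proof.
  unfold CPSeries, Cseries. apply injective_projections; cbn [fst snd RtoC].
  - apply Series_ext. intros n. rewrite <- RtoC_pow, <- RtoC_mult. reflexivity.
  - rewrite <- (Rmult_0_l (Series (fun _ => 0%R))), <- Series_scal_l.
    apply Series_ext. intros n. rewrite <- RtoC_pow, <- RtoC_mult. simpl. ring.
Qed.

Lemma cfun_Rsqr (r : R) : cfun (RtoC (Rsqr r)) = RtoC (cos r).
Proof.
  change (cfun (RtoC (Rsqr r))) with (CPSeries cos_n (RtoC (Rsqr r))).
  rewrite CPSeries_RtoC. f_equal. unfold cos. destruct (exist_cos (Rsqr r)) as [l Hl].
  apply is_series_unique, is_series_Reals, Hl.
Qed.

Lemma sfun_Rsqr (r : R) : RtoC r * sfun (RtoC (Rsqr r)) = RtoC (sin r).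
Proof.
  change (sfun (RtoC (Rsqr r))) with (CPSeries sin_n (RtoC (Rsqr r))).
  rewrite CPSeries_RtoC, <- RtoC_mult. f_equal. unfold sin. destruct (exist_sin (Rsqr r)) as [l Hl].
  f_equal. apply is_series_unique, is_series_Reals, Hl.
Qed.

Lemma x_sfun_sqr_plus_cfun_sqr (x : C) : x * sfun x ^ 2 + cfun x ^ 2 = RtoC 1.
Proof.
  set (G := fun t => t * sfun t ^ 2 + cfun t ^ 2).
  assert (HG : forall w, is_derive G w (RtoC 0)).
  { intros w. eapply is_derive_eq_val.
    - apply is_derive_Cplus; [apply is_derive_x_sfun_sqr | apply is_derive_cfun_sqr].
    - ring. }
  change (G x = RtoC 1). rewrite (zero_derive_const G HG x). unfold G.
  replace (RtoC 0) with (RtoC (Rsqr 0)) by (rewrite Rsqr_0; reflexivity).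
  rewrite cfun_Rsqr, cos_0, Rsqr_0. ring.
Qed.

Lemma Cmult_integral (u v : C) : u * v = RtoC 0 -> u = RtoC 0 \/ v = RtoC 0.
Proof.
  intros H. assert (Hm : (Cmod u * Cmod v)%R = 0%R) by (rewrite <- Cmod_mult, H; apply Cmod_0).
  destruct (Rmult_integral _ _ Hm); [left | right]; apply Cmod_eq_0; assumption.
Qed.

Lemma sfun_pi_sqr : sfun (RtoC (Rsqr PI)) = RtoC 0.
Proof.
  assert (H := sfun_Rsqr PI). rewrite sin_PI in H.
  destruct (Cmult_integral _ _ H) as [E | E]; [| exact E].
  apply RtoC_inj in E. destruct (PI_neq0 E).
Qed.

Lemma cfun_pi2_sqr : cfun (RtoC (Rsqr (PI / 2))) = RtoC 0.
Proof. rewrite cfun_Rsqr, cos_PI2. reflexivity. Qed.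

Lemma is_derive_C_unique (f : C -> C) (x l l' : C) :
  is_derive f x l -> is_derive f x l' -> l = l'.
Proof. intros H H'. rewrite <- (is_C_derive_unique f x l H). exact (is_C_derive_unique f x l' H'). Qed.

Lemma is_derive_fW_A_x (y x : C) : is_derive (fun t => fW A_half_infty t y) x (cfun x * sfun x).
Proof.
  eapply is_derive_eq_val; [apply is_derive_Cminus; [apply is_derive_x_sfun_sqr | apply is_derive_Cconst] |].
  ring.
Qed.

Lemma is_derive_fW_A_y (x y : C) : is_derive (fun t => fW A_half_infty x t) y (- (2 * y)).
Proof.
  eapply is_derive_eq_val.
  - apply (is_derive_Cminus (fun _ => x * sfun x ^ 2) (fun t => t ^ 2));
      [apply is_derive_Cconst | apply is_derive_Csqr, is_derive_Cid].
  - cbv beta. ring.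
Qed.

Lemma is_derive_fW_D_x (y x : C) :
  is_derive (fun t => fW D_half_infty t y) x (cfun x * sfun x - y ^ 2).
Proof.
  eapply is_derive_eq_val.
  - apply (is_derive_Cminus (fun t => t * sfun t ^ 2) (fun t => t * y ^ 2));
      [apply is_derive_x_sfun_sqr |].
    apply (is_derive_Cmult (fun t => t) (fun _ => y ^ 2)); [apply is_derive_Cid | apply is_derive_Cconst].
  - ring.
Qed.

Lemma is_derive_fW_D_y (x y : C) : is_derive (fun t => fW D_half_infty x t) y (- (2 * x * y)).
Proof.
  eapply is_derive_eq_val.
  - apply (is_derive_Cminus (fun _ => x * sfun x ^ 2) (fun t => x * t ^ 2)); [apply is_derive_Cconst |].
    apply (is_derive_Cmult (fun _ => x) (fun t => t ^ 2));
      [apply is_derive_Cconst | apply is_derive_Csqr, is_derive_Cid].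
  - cbv beta. ring.
Qed.

Lemma Copp_double_eq0 (u : C) : - (2 * u) = RtoC 0 -> u = RtoC 0.
Proof.
  intros H. assert (H2 : 2 * u = RtoC 0) by (replace (2 * u) with (- - (2 * u)) by ring; rewrite H; ring).
  destruct (Cmult_integral _ _ H2) as [E | E]; [| exact E].
  injection E. lra.
Qed.

Lemma critical_point_fW_A (x y : C) :
  critical_point (fW A_half_infty) x y -> y = RtoC 0 /\ cfun x * sfun x = RtoC 0.
Proof.
  intros [Hx Hy].
  assert (Ey : y = RtoC 0).
  { apply Copp_double_eq0. exact (is_derive_C_unique _ _ _ _ (is_derive_fW_A_y x y) Hy). }
  split; [exact Ey |]. subst y.
  exact (is_derive_C_unique _ _ _ _ (is_derive_fW_A_x _ x) Hx).
Qed.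

Lemma critical_point_fW_D (x y : C) : critical_point (fW D_half_infty) x y ->
  x = RtoC 0 \/ (y = RtoC 0 /\ cfun x * sfun x = RtoC 0).
Proof.
  intros [Hx Hy].
  assert (Exy : x * y = RtoC 0).
  { apply Copp_double_eq0. rewrite Cmult_assoc.
    exact (is_derive_C_unique _ _ _ _ (is_derive_fW_D_y x y) Hy). }
  destruct (Cmult_integral _ _ Exy) as [E | E]; [left; exact E | right].
  split; [exact E |]. subst y.
  transitivity (cfun x * sfun x - RtoC 0 ^ 2); [ring |].
  exact (is_derive_C_unique _ _ _ _ (is_derive_fW_D_x _ x) Hx).
Qed.

Lemma critical_point_fW_y0 (W : Wtype) (x : C) :
  cfun x * sfun x = RtoC 0 -> critical_point (fW W) x (RtoC 0).
Proof.
  intros H. destruct W; split.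
  - apply (is_derive_eq_val _ _ _ _ (is_derive_fW_A_x _ x)), H.
  - apply (is_derive_eq_val _ _ _ _ (is_derive_fW_A_y x _)). ring.
  - apply (is_derive_eq_val _ _ _ _ (is_derive_fW_D_x _ x)). rewrite H. ring.
  - apply (is_derive_eq_val _ _ _ _ (is_derive_fW_D_y x _)). ring.
Qed.

Lemma fW_y0 (W : Wtype) (x : C) : fW W x (RtoC 0) = x * sfun x ^ 2.
Proof. destruct W; simpl; ring. Qed.

Lemma x_sfun_sqr_values (x : C) : cfun x * sfun x = RtoC 0 ->
  x * sfun x ^ 2 = RtoC 0 \/ x * sfun x ^ 2 = RtoC 1.
Proof.
  intros H. destruct (Cmult_integral _ _ H) as [Hc | Hs].
  - right. rewrite <- (x_sfun_sqr_plus_cfun_sqr x), Hc. ring.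
  - left. rewrite Hs. ring.
Qed.

Lemma critical_values_fW (W : Wtype) (x y : C) : critical_point (fW W) x y ->
  fW W x y = RtoC 0 \/ fW W x y = RtoC 1.
Proof.
  intros Hcrit. destruct W.
  - destruct (critical_point_fW_A _ _ Hcrit) as [-> Hcs].
    rewrite fW_y0. exact (x_sfun_sqr_values x Hcs).
  - destruct (critical_point_fW_D _ _ Hcrit) as [-> | [-> Hcs]].
    + left. simpl. ring.
    + rewrite fW_y0. exact (x_sfun_sqr_values x Hcs).
Qed.

Theorem theorem1 (W : Wtype) :
  (forall x y : C, critical_point (fW W) x y ->
     fW W x y = 0 \/ fW W x y = 1) /\
  (exists x y : C, critical_point (fW W) x y /\ fW W x y = 0) /\
  (exists x y : C, critical_point (fW W) x y /\ fW W x y = 1).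
Proof.
  split; [| split].
  - exact (critical_values_fW W).
  - exists (RtoC (Rsqr PI)), (RtoC 0). split.
    + apply critical_point_fW_y0. rewrite sfun_pi_sqr. ring.
    + rewrite fW_y0, sfun_pi_sqr. ring.
  - exists (RtoC (Rsqr (PI / 2))), (RtoC 0). split.
    + apply critical_point_fW_y0. rewrite cfun_pi2_sqr. ring.
    + rewrite fW_y0, <- (x_sfun_sqr_plus_cfun_sqr (RtoC (Rsqr (PI / 2)))), cfun_pi2_sqr. ring.
Qed.
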